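(* Let $k\ge 0$ be an integer and let $G=(V,E)$ be a finite graph which is the union of a finite nonempty family $Q$ of v-cliques (i.e. $V=\bigcup_{C\in Q}C$ and $E$ is the set of pairs of distinct nodes lying in a common member of $Q$). Suppose that for every pair of v-cliques $C,C'\in Q$ there is a sequence $C=C_0,C_1,\dots,C_t=C'$ of members of $Q$ such that $|C_{i-1}\cap C_i|\ge k+1$ for all $i=1,\dots,t$. Then $G$ is $k$-robust.
   Context: A v-clique is a set of nodes inducing a complete subgraph. A finite simple undirected graph $H$ is $k$-robust if, after removing arbitrary $k$ nodes of $H$ and the edges incident to them, the remaining graph is still connected; a clique or a single node is $k$-robust for every $k$. *)

From mathcomp Require Import all_boot.
Set Implicit Arguments. Unset Strict Implicit. Unset Printing Implicit Defensive.

(* A finite simple graph is given by a vertex set V : {set T} (T a finType)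
   and a symmetric irreflexive adjacency relation adj on T (only its
   restriction to V matters). *)

(* The graph H = (V, adj) restricted to the vertex set W is connected:
   any two vertices of W are joined by a path staying inside W.
   (The empty graph counts as connected.) *)
Definition connected_on (T : finType) (adj : rel T) (W : {set T}) : Prop :=
  forall x y, x \in W -> y \in W ->
    connect [rel a b | [&& a \in W, b \in W & adj a b]] x y.

Definition k_robust (T : finType) (V : {set T}) (adj : rel T) (k : nat) : Prop :=
  forall S : {set T}, S \subset V -> #|S| <= k -> connected_on adj (V :\: S).

Definition union_vertices (T : finType) (Q : {set {set T}}) : {set T} :=
  \bigcup_(C in Q) C.

Definition union_adj (T : finType) (Q : {set {set T}}) : rel T :=
  fun x y => (x != y) && [exists C in Q, (x \in C) && (y \in C)].

Definition k_chain_linked (T : finType) (Q : {set {set T}}) (k : nat)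
    (C C' : {set T}) : Prop :=
  exists s : seq {set T},
    [/\ all (fun D => D \in Q) s,
        path (fun A B => k.+1 <= #|A :&: B|) C s
      & last C s = C'].

From mathcomp Require Import all_boot.

Set Implicit Arguments.
Unset Strict Implicit.
Unset Printing Implicit Defensive.

(* Removing a set S of at most k nodes cannot swallow the intersection of two
   consecutive cliques of a chain, since it has at least k+1 nodes.  So every
   step of a chain leaves a surviving common node, and inside each clique the
   surviving nodes are pairwise adjacent; walking along the chain from a
   clique of x to a clique of y connects x to y in the remaining graph. *)

Lemma big_setI_not_subset (T : finType) (A B S : {set T}) (k : nat) :
  #|S| <= k < #|A :&: B| -> ~~ (A :&: B \subset S).
Proof.
case/andP=> leSk ltkAB; apply/negP=> /subset_leq_card leABS.
by move: (leq_ltn_trans leSk ltkAB); rewrite ltnNge leABS.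
Qed.

Section CliqueUnion.
Variables (T : finType) (k : nat) (Q : {set {set T}}) (S : {set T}).
Hypothesis leSk : #|S| <= k.

Let W := union_vertices Q :\: S.
Let e := [rel a b | [&& a \in W, b \in W & union_adj Q a b]].

Lemma mem_union_vertices_setD C x : C \in Q -> x \in C -> x \notin S -> x \in W.
Proof. by move=> CQ xC xS; rewrite inE xS; apply/bigcupP; exists C. Qed.

Lemma connect_in_clique C z w :
  C \in Q -> z \in C :&: W -> w \in C :&: W -> connect e z w.
Proof.
move=> CQ /setIP[zC zW] /setIP[wC wW].
have [-> | neq_zw] := eqVneq z w; first exact: connect0.
apply: connect1; rewrite /= zW wW /union_adj neq_zw.
by apply/existsP; exists C; rewrite CQ zC wC.
Qed.

Lemma connect_along_chain (s : seq {set T}) C z y :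
  C \in Q -> all (mem Q) s -> path (fun A B => k.+1 <= #|A :&: B|) C s ->
  z \in C :&: W -> y \in last C s :&: W -> connect e z y.
Proof.
elim: s C z => [|D s IHs] C z CQ /=; first by move=> _ _; apply: connect_in_clique.
case/andP=> DQ sQ /andP[ltkCD chain_s] zCW yW.
have /subsetPn[w wCD wS] : ~~ (C :&: D \subset S).
  by apply: (big_setI_not_subset (k := k)); rewrite leSk.
have /setIP[wC wD] := wCD.
have wW := mem_union_vertices_setD DQ wD wS.
have wCW : w \in C :&: W by apply/setIP.
have wDW : w \in D :&: W by apply/setIP.
exact: connect_trans (connect_in_clique CQ zCW wCW) (IHs D w DQ sQ chain_s wDW yW).
Qed.

End CliqueUnion.

Theorem theorem2 (T : finType) (k : nat) (Q : {set {set T}}) :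
  Q != set0 ->
  (forall C C', C \in Q -> C' \in Q -> k_chain_linked Q k C C') ->
  k_robust (union_vertices Q) (union_adj Q) k.
Proof.
move=> _ linked S _ leSk x y xW yW.
have /setDP[/bigcupP[C CQ xC] _] := xW.
have /setDP[/bigcupP[C' C'Q yC'] _] := yW.
have [s [sQ chain_s last_s]] := linked C C' CQ C'Q.
apply: (connect_along_chain leSk CQ sQ chain_s); rewrite inE ?last_s.
- by rewrite xC xW.
- by rewrite yC' yW.
Qed.
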